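(* Let $\Pi$ be a finite, satisfiable set of linear constraints over $x_1,\dots,x_D$, let $\mathrm{CL}$ be the constraint layer built from $\Pi$ and the ordering $x_1,\dots,x_D$, and let $\mathrm{CL}^{\ge}$ be the constraint layer built from $\Pi^{\ge}$ and the same ordering. Let $\tilde x\in\mathbb{R}^D$. Then: (1) if $\mathrm{CL}(\tilde x)=\mathrm{CL}^{\ge}(\tilde x)$, then $\mathrm{CL}(\tilde x)$ is optimal with respect to $\Pi$; (2) otherwise, $\mathrm{CL}(\tilde x)$ tends to $\mathrm{CL}^{\ge}(\tilde x)$ as the $\epsilon$ values used to compute $\mathrm{CL}(\tilde x)$ tend to $0$ (i.e., regarding $\mathrm{CL}(\tilde x)$, with all other aspects of the computation fixed, as a function of the $\epsilon$ values $\epsilon_1,\dots,\epsilon_k$, one has $\lim_{(\epsilon_1,\dots,\epsilon_k)\to 0}\mathrm{CL}(\tilde x)=\mathrm{CL}^{\ge}(\tilde x)$).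
   Context: A constraint is a linear inequality $\phi:\ \sum_{k=1}^D w_k x_k + b \unrhd 0$ with $w_k,b\in\mathbb{R}$ and $\unrhd\in\{\ge,>\}$; it is strict if $\unrhd$ is $>$. A point $\tilde x\in\mathbb{R}^D$ satisfies $\phi$ if $\sum_k w_k\tilde x_k+b\unrhd 0$, and satisfies a set $\Pi$ if it satisfies every member; $\Pi$ is satisfiable if some point satisfies it. $\Pi^{\ge}$ denotes the set obtained from $\Pi$ by replacing each strict constraint $\sum_kw_kx_k+b>0$ by $\sum_kw_kx_k+b\ge0$. Variable $x_j$ appears positively (resp. negatively) in $\phi$ if $w_j>0$ (resp. $w_j<0$). For a set $\Gamma$ of constraints, $\Gamma^+_j$ (resp. $\Gamma^-_j$) is the subset in which $x_j$ appears positively (resp. negatively). Reduction: for $\phi^1=\sum_k w^1_kx_k+b^1\unrhd^1 0\in\Gamma^-_j$ and $\phi^2=\sum_k w^2_kx_k+b^2\unrhd^2 0\in\Gamma^+_j$, $red_j(\phi^1,\phi^2)$ is $\sum_{k\ne j}(w^1_k|w^2_j|+w^2_k|w^1_j|)x_k + b^1|w^2_j|+b^2|w^1_j| \unrhd 0$, where $\unrhd$ is $\ge$ if both $\unrhd^1,\unrhd^2$ are $\ge$, and $>$ otherwise. Sets $\Pi_i$ (for a constraint set $\Pi$): $\Pi_D=\Pi$, and for $i<D$, with $j=i+1$, $\Pi_i=(\Pi_j\setminus(\Pi^-_j\cup\Pi^+_j))\cup\{red_j(\phi^1,\phi^2):\phi^1\in\Pi^-_j,\phi^2\in\Pi^+_j\}$,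 where $\Pi^\pm_j$ means $(\Pi_j)^\pm_j$. (Thus only $x_1,\dots,x_i$ occur in $\Pi_i$; we write $\Pi_i^\pm$ for $(\Pi_i)^\pm_i$.) For $\phi=\sum_kw_kx_k+b\unrhd0$ with $w_i\neq0$, let $\varepsilon^\phi_i=-\sum_{k\ne i}(w_k/w_i)x_k-b/w_i$; for $\phi\in\Pi_i$ it depends only on $x_1,\dots,x_{i-1}$. Constraint layer built from $\Pi$: given $\tilde x\in\mathbb{R}^D$, $\mathrm{CL}(\tilde x)\in\mathbb{R}^D$ is computed coordinatewise for $i=1,\dots,D$. Let $\varepsilon^\phi_i(\mathrm{CL}(\tilde x))$ denote $\varepsilon^\phi_i$ evaluated at the already computed values $\mathrm{CL}(\tilde x)_1,\dots,\mathrm{CL}(\tilde x)_{i-1}$, and set $ub_i=\min\{\varepsilon^\phi_i(\mathrm{CL}(\tilde x)):\phi\in\Pi_i^-\}$, $lb_i=\max\{\varepsilon^\phi_i(\mathrm{CL}(\tilde x)):\phi\in\Pi_i^+\}$ (with $\min\emptyset=+\infty$, $\max\emptyset=-\infty$). Then $\mathrm{CL}(\tilde x)_i=\min^i(\max^i(\tilde x_i,lb_i),ub_i)$, where $\max^i(a,lb_i)$ equals $v=\max(a,lb_i)$ unless some strict $\phi\in\Pi_i^+$ has $v=\varepsilon^\phi_i(\mathrm{CL}(\tilde x))$, in which case it equals $v+\epsilon$ for a chosen $\epsilon>0$ small enough that $lb_i+\epsilon< ub_i$; symmetrically $\min^i(a,ub_i)$ equals $u=\min(a,ub_i)$ unless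 some strict $\phi\in\Pi_i^-$ has $u=\varepsilon^\phi_i(\mathrm{CL}(\tilde x))$, in which case it equals $u-\epsilon$ for a chosen $\epsilon>0$ small enough that $ub_i-\epsilon>lb_i$. The chosen positive numbers are the $\epsilon$ values used to compute $\mathrm{CL}(\tilde x)$. Since $\Pi^{\ge}$ has no strict constraints, $\mathrm{CL}^{\ge}$ uses no $\epsilon$ values: $\mathrm{CL}^{\ge}(\tilde x)_i=\min(\max(\tilde x_i,lb_i),ub_i)$ with bounds computed from $\Pi^{\ge}$. Optimality: for a set of constraints $\Gamma$ and $\tilde x\in\mathbb{R}^D$, a point $y\in\mathbb{R}^D$ is optimal (for $\tilde x$) with respect to $\Gamma$ if $y$ satisfies $\Gamma$ and there is no $\tilde x'\neq y$ satisfying $\Gamma$ with $|\tilde x'_i-\tilde x_i|\le|y_i-\tilde x_i|$ for all $i=1,\dots,D$. *)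

(* Coordinates x_1..x_D of the paper are the ordinals 0..D-1. *)
From Stdlib Require List.
From mathcomp Require Import all_boot all_order all_algebra.
Set Implicit Arguments. Unset Strict Implicit. Unset Printing Implicit Defensive.
Import Order.TTheory GRing.Theory Num.Theory.
Local Open Scope ring_scope.

Section ConstraintLayer.
Context {R : realFieldType} {D : nat}.

(* A linear constraint  sum_k w_k x_k + b (>= or >) 0 ; strict iff cstrict. *)
Record constr := Constr { cw : 'I_D -> R; cb : R; cstrict : bool }.

Definition cval (phi : constr) (x : 'I_D -> R) : R :=
  \sum_(k < D) cw phi k * x k + cb phi.

Definition sat (phi : constr) (x : 'I_D -> R) : Prop :=
  if cstrict phi then 0 < cval phi x else 0 <= cval phi x.

Definition sat_set (Pi : seq constr) (x : 'I_D -> R) : Prop :=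
  forall phi, List.In phi Pi -> sat phi x.

Definition satisfiable (Pi : seq constr) : Prop := exists x, sat_set Pi x.

(* Pi^>= : every strict constraint made non-strict *)
Definition relax (Pi : seq constr) : seq constr :=
  [seq Constr (cw phi) (cb phi) false | phi <- Pi].

(* red_j(phi1, phi2), phi1 in Gamma^-_j, phi2 in Gamma^+_j *)
Definition red (j : 'I_D) (phi1 phi2 : constr) : constr :=
  Constr (fun k => if k == j then 0
                   else cw phi1 k * `|cw phi2 j| + cw phi2 k * `|cw phi1 j|)
         (cb phi1 * `|cw phi2 j| + cb phi2 * `|cw phi1 j|)
         (cstrict phi1 || cstrict phi2).

Definition negs (j : 'I_D) (G : seq constr) := [seq phi <- G | cw phi j < 0].
Definition poss (j : 'I_D) (G : seq constr) := [seq phi <- G | 0 < cw phi j].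

(* one Fourier-Motzkin step eliminating variable j *)
Definition elim (j : 'I_D) (G : seq constr) : seq constr :=
  [seq phi <- G | cw phi j == 0] ++
  [seq red j phi1 phi2 | phi1 <- negs j G, phi2 <- poss j G].

(* elimFrom Pi n = Pi_{D-n} *)
Fixpoint elimFrom (Pi : seq constr) (n : nat) : seq constr :=
  match n with
  | 0 => Pi
  | n'.+1 =>
    match (insub (D - n'.+1)%N : option 'I_D) with
    | Some j => elim j (elimFrom Pi n')
    | None => elimFrom Pi n'
    end
  end.

Definition PiSet (Pi : seq constr) (i : nat) : seq constr := elimFrom Pi (D - i)%N.

Definition epsv (phi : constr) (k : 'I_D) (y : 'I_D -> R) : R :=
  - (\sum_(l < D | l != k) (cw phi l / cw phi k) * y l) - cb phi / cw phi k.

Definition maxlist (s : seq R) : option R :=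
  if s is a :: s' then Some (foldr Num.max a s') else None.
Definition minlist (s : seq R) : option R :=
  if s is a :: s' then Some (foldr Num.min a s') else None.

Section Step.
Variables (Pi : seq constr) (el eu : 'I_D -> R) (x : 'I_D -> R).
(* k : the coordinate being computed (paper's i = k+1);
   y : the already computed values (coordinates < k), others set to 0 *)
Variables (k : 'I_D) (y : 'I_D -> R).

Definition Gk := PiSet Pi k.+1.
Definition lbk : option R := maxlist [seq epsv phi k y | phi <- poss k Gk].
Definition ubk : option R := minlist [seq epsv phi k y | phi <- negs k Gk].

Definition vk : R := if lbk is Some l then Num.max (x k) l else x k.
Definition trig_lo : bool :=
  has (fun phi => cstrict phi && (vk == epsv phi k y)) (poss k Gk).
Definition maxk : R := if trig_lo then vk + el k else vk.

Definition uk : R := if ubk is Some u then Num.min maxk u else maxk.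
Definition trig_hi : bool :=
  has (fun phi => cstrict phi && (uk == epsv phi k y)) (negs k Gk).
Definition CLk : R := if trig_hi then uk - eu k else uk.

(* a < b in the extended reals, None meaning -oo (left) / +oo (right) *)
Definition olt (a b : option R) : Prop :=
  match a, b with Some a', Some b' => a' < b' | _, _ => True end.

Definition step_ok : Prop :=
  0 < el k /\ 0 < eu k /\
  (trig_lo -> olt (omap (fun l => l + el k) lbk) ubk) /\
  (trig_hi -> olt lbk (omap (fun u => u - eu k) ubk)).
End Step.

Fixpoint CLaux (Pi : seq constr) (el eu x : 'I_D -> R) (m : nat) : 'I_D -> R :=
  match m with
  | 0 => fun _ => 0
  | m'.+1 => let y := CLaux Pi el eu x m' in
             fun l => if (l : nat) == m' then CLk Pi el eu x l y else y l
  end.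

(* CL(x) built from Pi, with epsilon values el (used by max^i) and
   eu (used by min^i) at coordinate i *)
Definition CL (Pi : seq constr) (el eu x : 'I_D -> R) : 'I_D -> R :=
  CLaux Pi el eu x D.

Definition admissible (Pi : seq constr) (el eu x : 'I_D -> R) : Prop :=
  forall k : 'I_D, step_ok Pi el eu x k (CLaux Pi el eu x k).

Definition CLge (Pi : seq constr) (x : 'I_D -> R) : 'I_D -> R :=
  CL (relax Pi) (fun _ => 0) (fun _ => 0) x.

Definition optimal (G : seq constr) (x y : 'I_D -> R) : Prop :=
  sat_set G y /\
  forall x', sat_set G x' -> (forall i, `|x' i - x i| <= `|y i - x i|) ->
             forall i, x' i = y i.

End ConstraintLayer.

(* Coordinate i of CL(x) is x_i clamped to the interval that the projection
   Pi_i allows for x_i once x_1 .. x_(i-1) are fixed, moved inward by an epsilon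
   when it would land on a strict bound.  A reduced constraint red_j(phi1, phi2)
   holds exactly when the lower bound on x_j given by phi2 lies below the upper
   bound given by phi1 (strictly if either is strict), so a point satisfying
   Pi_(i-1) always extends to one satisfying Pi_i, and CL(x) satisfies Pi.
   With every epsilon equal to 0, each coordinate is the point of its interval
   nearest to x_i; a point of Pi that is coordinatewise at least as close to x
   therefore agrees with CL^>=(x) coordinate by coordinate, which gives (1).
   For (2), the bounds are Lipschitz in the earlier coordinates with a constant
   L independent of the epsilons, and Pi and Pi^>= induce the same bounds, so
   |CL(x) - CL^>=(x)| <= (L + 2)^D * max epsilon. *)

From Stdlib Require List.
From mathcomp Require Import all_boot all_order all_algebra.
From mathcomp Require Import ring lra zify.
Import Order.TTheory GRing.Theory Num.Theory.
Set Implicit Arguments. Unset Strict Implicit. Unset Printing Implicit Defensive.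
Local Open Scope ring_scope.

Section ListIn.
Variables S T U : Type.

Lemma In_filter (p : pred T) (s : seq T) a :
  List.In a (filter p s) <-> List.In a s /\ p a.
Proof. exact: List.filter_In. Qed.

Lemma has_In (p : pred T) (s : seq T) : has p s <-> exists a, List.In a s /\ p a.
Proof. exact: List.existsb_exists. Qed.

Lemma In_map (f : S -> T) s a : List.In a s -> List.In (f a) (map f s).
Proof. exact: List.in_map. Qed.

Lemma In_mapP (f : S -> T) s b :
  List.In b (map f s) <-> exists a, f a = b /\ List.In a s.
Proof. exact: List.in_map_iff. Qed.

Lemma In_allpairs (f : S -> T -> U) s t c :
  List.In c [seq f a b | a <- s, b <- t] <->
  exists a b, List.In a s /\ List.In b t /\ c = f a b.
Proof.
change (List.In c (List.concat (List.map (fun a => List.map (f a) t) s)) <->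
        exists a b, List.In a s /\ List.In b t /\ c = f a b).
rewrite List.in_concat; split.
- move=> [l [/List.in_map_iff [a [<- Ha]] /List.in_map_iff [b [<- Hb]]]].
  by exists a, b.
- move=> [a [b [Ha [Hb ->]]]]; exists (List.map (f a) t); split.
    by apply/List.in_map_iff; exists a.
  exact: List.in_map.
Qed.

End ListIn.

Section ExtremumList.
Variable R : realFieldType.

Lemma maxlist_ge (s : seq R) b : List.In b s -> exists2 m, maxlist s = Some m & b <= m.
Proof.
case: s => [//|a s] Hb; exists (foldr Num.max a s) => //.
elim: s Hb => [|c s IH] /=; first by case=> [<-|[]].
rewrite le_max; case=> [Ha|[<-|Hs]]; rewrite ?lexx //.
- by rewrite IH ?orbT //; left.
- by rewrite IH ?orbT //; right.
Qed.

Lemma maxlist_in (s : seq R) m : maxlist s = Some m -> List.In m s.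
Proof.
case: s => [//|a s] [<-]; elim: s => [|c s IH] /=; first by left.
by case: leP => _; [case: IH => H; [left|right; right]|right; left].
Qed.

Lemma minlist_le (s : seq R) b : List.In b s -> exists2 m, minlist s = Some m & m <= b.
Proof.
case: s => [//|a s] Hb; exists (foldr Num.min a s) => //.
elim: s Hb => [|c s IH] /=; first by case=> [<-|[]].
rewrite ge_min; case=> [Ha|[<-|Hs]]; rewrite ?lexx //.
- by rewrite IH ?orbT //; left.
- by rewrite IH ?orbT //; right.
Qed.

Lemma minlist_in (s : seq R) m : minlist s = Some m -> List.In m s.
Proof.
case: s => [//|a s] [<-]; elim: s => [|c s IH] /=; first by left.
by case: leP => _; [right; left|case: IH => H; [left|right; right]].
Qed.

End ExtremumList.

Section FourierMotzkin.
Context {R : realFieldType} {D : nat}.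
Local Notation constr := (@constr R D).
Implicit Types (phi n p : constr) (G Pi : seq constr) (y z : 'I_D -> R).

Lemma satE phi y : sat phi y <-> (0 < cval phi y ?<= if ~~ cstrict phi).
Proof. by rewrite /sat; case: cstrict. Qed.

Lemma eq_sat phi y z : (forall l, cw phi l = 0 \/ y l = z l) ->
  sat phi y -> sat phi z.
Proof.
move=> Hyz; rewrite /sat; suff -> : cval phi z = cval phi y by [].
rewrite /cval; congr (_ + _); apply: eq_bigr => l _.
by case: (Hyz l) => ->; rewrite ?mul0r.
Qed.

Lemma eq_epsv phi k y z : (forall l, l != k -> cw phi l = 0 \/ y l = z l) ->
  epsv phi k y = epsv phi k z.
Proof.
move=> Hyz; rewrite /epsv; congr (- _ - _); apply: eq_bigr => l lk.
by case: (Hyz l lk) => ->; rewrite ?mul0r ?mulr0.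
Qed.

Lemma cval_epsv phi k y : cw phi k != 0 ->
  cval phi y = cw phi k * (y k - epsv phi k y).
Proof.
move=> wk0; rewrite /cval /epsv (bigD1 k) //=.
have -> : \sum_(l < D | l != k) cw phi l * y l =
          cw phi k * \sum_(l < D | l != k) cw phi l / cw phi k * y l.
  by rewrite mulr_sumr; apply: eq_bigr => l _; field.
by field.
Qed.

Lemma sat_pos phi k y : 0 < cw phi k ->
  sat phi y <-> (epsv phi k y < y k ?<= if ~~ cstrict phi).
Proof.
move=> wk; rewrite satE (cval_epsv _ (lt0r_neq0 wk)) -(mulr0 (cw phi k)).
by rewrite lteif_pM2l // subr_lteif0r.
Qed.

Lemma sat_neg phi k y : cw phi k < 0 ->
  sat phi y <-> (y k < epsv phi k y ?<= if ~~ cstrict phi).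
Proof.
move=> wk; rewrite satE (cval_epsv _ (ltr0_neq0 wk)) -mulrNN opprB.
by rewrite -(mulr0 (- cw phi k)) lteif_pM2l ?oppr_gt0 // subr_lteif0r.
Qed.

Lemma cval_red j n p y : cw n j < 0 -> 0 < cw p j ->
  cval (red j n p) y = cw p j * - cw n j * (epsv n j y - epsv p j y).
Proof.
move=> wn wp.
have -> : cval (red j n p) y = cw p j * cval n y - cw n j * cval p y.
  rewrite /cval /= (gtr0_norm wp) (ltr0_norm wn).
  have -> : \sum_(l < D) (if l == j then 0
                           else cw n l * cw p j + cw p l * - cw n j) * y l =
            cw p j * \sum_(l < D) cw n l * y l - cw n j * \sum_(l < D) cw p l * y l.
    by rewrite !mulr_sumr -sumrB; apply: eq_bigr => l _; case: eqP => [->|_]; ring.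
  ring.
rewrite (cval_epsv y (ltr0_neq0 wn)) (cval_epsv y (lt0r_neq0 wp)); ring.
Qed.

Lemma sat_red_iff j n p y : cw n j < 0 -> 0 < cw p j ->
  sat (red j n p) y <->
  (epsv p j y < epsv n j y ?<= if ~~ (cstrict n || cstrict p)).
Proof.
move=> wn wp; rewrite satE cval_red // -(mulr0 (cw p j * - cw n j)).
by rewrite lteif_pM2l ?subr_lteif0r // mulr_gt0 ?oppr_gt0.
Qed.

Lemma sat_red j n p y : cw n j < 0 -> 0 < cw p j ->
  sat n y -> sat p y -> sat (red j n p) y.
Proof.
move=> wn wp /(sat_neg _ wn) yn /(sat_pos _ wp) py; apply/sat_red_iff => //.
by rewrite negb_or andbC; apply: lteif_trans py yn.
Qed.

Lemma In_elim j G phi : List.In phi (elim j G) <->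
  (List.In phi G /\ cw phi j = 0) \/
  exists n p, List.In n (negs j G) /\ List.In p (poss j G) /\ phi = red j n p.
Proof.
rewrite /elim List.in_app_iff In_filter In_allpairs.
by split; case=> [[H /eqP w]|H]; [left|right|left|right].
Qed.

Lemma sat_elim j G y : sat_set G y -> sat_set (elim j G) y.
Proof.
move=> HG phi /In_elim [[/HG //]|[n [p [Hn [Hp ->]]]]].
move: Hn Hp => /In_filter [/HG yn wn] /In_filter [/HG yp wp].
exact: sat_red.
Qed.

Lemma sat_PiSet Pi i y : sat_set Pi y -> sat_set (PiSet Pi i) y.
Proof.
rewrite /PiSet; elim: (D - i)%N => [//|m IH] /= /IH HPi.
by case: insub => [j|]; first exact: sat_elim.
Qed.

Lemma cw_elim_pivot j G phi : List.In phi (elim j G) -> cw phi j = 0.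
Proof. by case/In_elim=> [[_ //]|[n [p [_ [_ ->]]]]] /=; rewrite eqxx. Qed.

Lemma cw_elim_zero j G l : (forall psi, List.In psi G -> cw psi l = 0) ->
  forall phi, List.In phi (elim j G) -> cw phi l = 0.
Proof.
move=> HG phi /In_elim [[/HG //]|[n [p [/In_filter [Hn _] [/In_filter [Hp _] ->]]]]] /=.
by rewrite (HG _ Hn) (HG _ Hp) !mul0r addr0 if_same.
Qed.

Lemma elimFrom_zero Pi m phi : List.In phi (elimFrom Pi m) ->
  forall l : 'I_D, (D - m <= l)%N -> cw phi l = 0.
Proof.
elim: m phi => [|m IH] phi /=; first by move=> _ l; have := ltn_ord l; lia.
case: insubP => [j _ ej|+ _ l]; last by rewrite -leqNgt; have := ltn_ord l; lia.
move=> Hphi l ml; case: (eqVneq l j) => [->|lj]; first exact: cw_elim_pivot Hphi.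
apply: (cw_elim_zero _ Hphi) => psi /IH; apply.
by move: lj; rewrite -val_eqE ej /=; lia.
Qed.

Lemma PiSet_zero Pi i phi : List.In phi (PiSet Pi i) ->
  forall l : 'I_D, (i <= l)%N -> cw phi l = 0.
Proof. by move/elimFrom_zero => H l il; apply: H; lia. Qed.

Lemma PiSet_succ Pi (k : 'I_D) : PiSet Pi k = elim k (PiSet Pi k.+1).
Proof.
rewrite /PiSet; have -> : (D - k = (D - k.+1).+1)%N by have := ltn_ord k; lia.
have kE : (D - (D - k.+1).+1)%N = k by have := ltn_ord k; lia.
by rewrite /= kE valK.
Qed.

End FourierMotzkin.

Section Coordinate.
Context {R : realFieldType} {D : nat}.
Variables (Pi : seq (@constr R D)) (el eu x : 'I_D -> R) (k : 'I_D) (y : 'I_D -> R).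
Local Notation P := (poss k (Gk Pi k)).
Local Notation N := (negs k (Gk Pi k)).
Local Notation eps phi := (epsv phi k y).

Lemma lbk_ge p : List.In p P -> exists2 l, lbk Pi k y = Some l & eps p <= l.
Proof. by move=> Hp; apply: maxlist_ge; apply: In_map. Qed.

Lemma ubk_le n : List.In n N -> exists2 u, ubk Pi k y = Some u & u <= eps n.
Proof. by move=> Hn; apply: minlist_le; apply: In_map. Qed.

Lemma lbk_in l : lbk Pi k y = Some l -> exists2 p, List.In p P & l = eps p.
Proof. by move/maxlist_in/In_mapP => [p [<- Hp]]; exists p. Qed.

Lemma ubk_in u : ubk Pi k y = Some u -> exists2 n, List.In n N & u = eps n.
Proof. by move/minlist_in/In_mapP => [n [<- Hn]]; exists n. Qed.

Hypothesis ok : step_ok Pi el eu x k y.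
Hypothesis y_sat : sat_set (elim k (Gk Pi k)) y.

Lemma epsv_poss_negs p n : List.In p P -> List.In n N ->
  eps p < eps n ?<= if ~~ (cstrict n || cstrict p).
Proof.
move=> Hp Hn; move: (Hp) (Hn) => /In_filter [_ wp] /In_filter [_ wn].
apply/(sat_red_iff _ wn wp)/y_sat/In_elim; right; by exists n, p.
Qed.

Lemma vk_ge p : List.In p P -> eps p <= vk Pi x k y.
Proof.
move=> /lbk_ge [l El pl]; rewrite /vk El.
by apply: le_trans pl _; rewrite le_max lexx orbT.
Qed.

Lemma maxk_gt p : List.In p P -> eps p < maxk Pi el x k y ?<= if ~~ cstrict p.
Proof.
move=> Hp; have pv := vk_ge Hp; rewrite /maxk; case: ifP => trig.
  by apply: lteifS; apply: le_lt_trans pv _; rewrite ltrDl; case: ok.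
case sp: (cstrict p) => //=; rewrite lt_def pv andbT.
apply: contraFN trig => /eqP pE; apply/has_In; exists p.
by rewrite sp pE eqxx.
Qed.

Lemma uk_gt p : List.In p P -> eps p < uk Pi el x k y ?<= if ~~ cstrict p.
Proof.
move=> Hp; rewrite /uk; case E: ubk => [u|]; last exact: maxk_gt.
rewrite lteif_minr maxk_gt //=; have [n Hn ->] := ubk_in E.
by apply: lteif_imply (epsv_poss_negs Hp Hn); case: (cstrict n); case: (cstrict p).
Qed.

Lemma uk_le n : List.In n N -> uk Pi el x k y <= eps n.
Proof.
move=> /ubk_le [u Eu un]; rewrite /uk Eu.
by apply: le_trans un; rewrite ge_min lexx orbT.
Qed.

Lemma CLk_gt p : List.In p P -> eps p < CLk Pi el eu x k y ?<= if ~~ cstrict p.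
Proof.
move=> Hp; rewrite /CLk; case: ifP => trig; last exact: uk_gt.
have [n [Hn /andP [_ /eqP nE]]] := (has_In _ _).1 trig.
have [u Eu un] := ubk_le Hn; have [l El pl] := lbk_ge Hp.
(* admissibility of eu k keeps the shifted value above every lower bound *)
have := ok.2.2.2 trig; rewrite El Eu /= => lu.
by apply: lteifS; move: un; rewrite -nE; lra.
Qed.

Lemma CLk_lt n : List.In n N -> CLk Pi el eu x k y < eps n ?<= if ~~ cstrict n.
Proof.
move=> Hn; have un := uk_le Hn; rewrite /CLk; case: ifP => trig.
  by apply: lteifS; have [_ [eu0 _]] := ok; lra.
case sn: (cstrict n) => //=; rewrite lt_def un andbT.
apply: contraFN trig => /eqP nE; apply/has_In; exists n.
by rewrite sn nE eqxx.
Qed.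

End Coordinate.

Section Feasibility.
Context {R : realFieldType} {D : nat}.
Implicit Types (Pi : seq (@constr R D)) (el eu x : 'I_D -> R).

Lemma CLaux_succ Pi el eu x (k l : 'I_D) :
  CLaux Pi el eu x k.+1 l =
  if l == k then CLk Pi el eu x k (CLaux Pi el eu x k) else CLaux Pi el eu x k l.
Proof.
rewrite /=; case: (eqVneq l k) => [->|lk]; first by rewrite eqxx.
by have -> : ((l : nat) == k) = false by apply/negbTE.
Qed.

Lemma CLaux_stable Pi el eu x m n (l : 'I_D) : (l < m <= n)%N ->
  CLaux Pi el eu x n l = CLaux Pi el eu x m l.
Proof.
move=> /andP [lm]; elim: n => [|n IH]; first by rewrite leqn0 => /eqP ->.
rewrite leq_eqVlt ltnS => /orP [/eqP -> //|mn] /=.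
by rewrite -(IH mn); case: eqP => // ln; move: lm mn; rewrite ln; lia.
Qed.

Lemma sat_CLaux_succ Pi el eu x (k : 'I_D) :
  step_ok Pi el eu x k (CLaux Pi el eu x k) ->
  sat_set (PiSet Pi k) (CLaux Pi el eu x k) ->
  sat_set (PiSet Pi k.+1) (CLaux Pi el eu x k.+1).
Proof.
rewrite PiSet_succ => ok y_sat phi Hphi.
set y := CLaux Pi el eu x k; set y' := CLaux Pi el eu x k.+1.
have y'k : y' k = CLk Pi el eu x k y by rewrite /y' CLaux_succ eqxx.
have y'E : forall l, l != k -> y' l = y l.
  by move=> l lk; rewrite /y' CLaux_succ (negbTE lk).
have epsE : epsv phi k y' = epsv phi k y by apply: eq_epsv => l /y'E; right.
case: (ltgtP (cw phi k) 0) => wk.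
- by apply/(sat_neg _ wk); rewrite y'k epsE; apply: CLk_lt => //; apply/In_filter.
- by apply/(sat_pos _ wk); rewrite y'k epsE; apply: CLk_gt => //; apply/In_filter.
- have : sat phi y by apply/y_sat/In_elim; left.
  apply: eq_sat => l.
  by case: (eqVneq l k) => [->|/y'E]; [left|right].
Qed.

Lemma CL_sat Pi el eu x : satisfiable Pi -> admissible Pi el eu x ->
  sat_set Pi (CL Pi el eu x).
Proof.
move=> [z z_sat] adm.
suff : forall m, (m <= D)%N -> sat_set (PiSet Pi m) (CLaux Pi el eu x m).
  by move=> /(_ D (leqnn D)); rewrite /PiSet subnn.
elim=> [_ phi Hphi|m IH mD]; last exact: (sat_CLaux_succ (adm (Ordinal mD)) (IH (ltnW mD))).
apply: eq_sat (sat_PiSet z_sat Hphi) => l.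
by left; apply: PiSet_zero Hphi _ _.
Qed.

End Feasibility.

Section NearestPoint.
Context {R : realFieldType} {D : nat}.
Implicit Types (Q : seq (@constr R D)) (x : 'I_D -> R).

Definition clamp (lo hi : option R) (a : R) : R :=
  let v := if lo is Some l then Num.max a l else a in
  if hi is Some u then Num.min v u else v.

Lemma CLk_eps0 Q x k y :
  CLk Q (fun _ => 0) (fun _ => 0) x k y = clamp (lbk Q k y) (ubk Q k y) (x k).
Proof.
rewrite /CLk /uk /maxk /vk /clamp.
by case: ifP => _; case: ifP => _; rewrite ?addr0 ?subr0.
Qed.

Lemma dist_between_eq (a c t : R) : (a <= c <= t) || (t <= c <= a) ->
  `|t - a| <= `|c - a| -> t = c.
Proof.
case/orP=> /andP [h1 h2].
  by rewrite !ger0_norm ?subr_ge0 ?(le_trans h1 h2) //; lra.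
by rewrite !ler0_norm ?subr_le0 ?(le_trans h1 h2) //; lra.
Qed.

Definition above (lo : option R) (t : R) := if lo is Some l then l <= t else true.
Definition below (hi : option R) (t : R) := if hi is Some u then t <= u else true.

Lemma clamp_between lo hi (a t : R) : above lo t -> below hi t ->
  (a <= clamp lo hi a <= t) || (t <= clamp lo hi a <= a).
Proof.
have stay : (a <= a <= t) || (t <= a <= a) by rewrite lexx andbT le_total.
have hi_clamp u : t <= u -> (a <= Num.min a u <= t) || (t <= Num.min a u <= a).
  by move=> tu; rewrite minEle; case: (leP a u) => // ua; rewrite tu (ltW ua) orbT.
rewrite /clamp; case: lo => [l|]; case: hi => [u|] /= lt tu //.
- rewrite maxEle; case: (leP a l) => [al|_]; last exact: hi_clamp.
  by rewrite minEle (le_trans lt tu) al lt.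
- by rewrite maxEle; case: (leP a l) => // al; rewrite al lt.
- exact: hi_clamp.
Qed.

Lemma CL_eps0_closest Q x x' : sat_set Q x' ->
  (forall i, `|x' i - x i| <= `|CL Q (fun _ => 0) (fun _ => 0) x i - x i|) ->
  forall i, x' i = CL Q (fun _ => 0) (fun _ => 0) x i.
Proof.
move=> x'_sat x'_near; set z := CLaux Q (fun _ => 0) (fun _ => 0) x.
suff H m : (m <= D)%N -> forall l : 'I_D, (l < m)%N -> x' l = z D l.
  by move=> i; apply: (H D (leqnn D)).
elim: m => [//|m IH] mD l; rewrite ltnS leq_eqVlt => /orP [/eqP lm|]; last exact: IH (ltnW mD) l.
set k := Ordinal mD; have -> : l = k by apply: val_inj.
have epsE phi : List.In phi (Gk Q k) -> epsv phi k x' = epsv phi k (z k).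
  move=> Hphi; apply: eq_epsv => j jk; case: (ltngtP j k) => jk'.
  - have jkD : (j < k <= D)%N by rewrite jk' ltnW.
    by right; rewrite (IH (ltnW mD) j jk') /z (CLaux_stable _ _ _ _ jkD).
  - by left; apply: PiSet_zero Hphi _ _.
  - by case/eqP: jk; apply: val_inj.
have zE : z D k = clamp (lbk Q k (z k)) (ubk Q k (z k)) (x k).
  have kD : (k < k.+1 <= D)%N by rewrite ltnSn.
  by rewrite /z (CLaux_stable _ _ _ _ kD) CLaux_succ eqxx CLk_eps0.
rewrite zE; apply: dist_between_eq; last by rewrite -zE; apply: x'_near.
apply: clamp_between.
- case E: lbk => [b|] //=; have [p Hp ->] := lbk_in E.
  move: Hp => /In_filter [Hp wp]; rewrite -epsE //.
  exact: lteifW ((sat_pos _ wp).1 (sat_PiSet x'_sat Hp)).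
- case E: ubk => [b|] //=; have [n Hn ->] := ubk_in E.
  move: Hn => /In_filter [Hn wn]; rewrite -epsE //.
  exact: lteifW ((sat_neg _ wn).1 (sat_PiSet x'_sat Hn)).
Qed.

End NearestPoint.

Section Relaxation.
Context {R : realFieldType} {D : nat}.
Implicit Types (Pi : seq (@constr R D)).

Definition nonstrict (phi : @constr R D) := Constr (cw phi) (cb phi) false.

Lemma sat_relax Pi y : sat_set Pi y -> sat_set (relax Pi) y.
Proof.
move=> Pi_sat _ /In_mapP [phi [<- Hphi]]; have := Pi_sat _ Hphi.
by rewrite /sat /=; case: cstrict => // /ltW.
Qed.

Lemma allpairs_nonstrict j G G' :
  [seq red j n p | n <- map nonstrict G, p <- map nonstrict G'] =
  map nonstrict [seq red j n p | n <- G, p <- G'].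
Proof. by elim: G => [//|n G IH] /=; rewrite map_cat IH -!map_comp. Qed.

Lemma elim_relax j Pi : elim j (relax Pi) = relax (elim j Pi).
Proof.
by rewrite /elim /relax map_cat /negs /poss !filter_map -allpairs_nonstrict.
Qed.

Lemma PiSet_relax Pi i : PiSet (relax Pi) i = relax (PiSet Pi i).
Proof.
rewrite /PiSet; elim: (D - i)%N => [//|m IH] /=.
by case: insub => [j|]; rewrite ?IH ?elim_relax.
Qed.

Lemma lbk_relax Pi k y : lbk (relax Pi) k y = lbk Pi k y.
Proof. by rewrite /lbk /Gk PiSet_relax /poss filter_map -map_comp. Qed.

Lemma ubk_relax Pi k y : ubk (relax Pi) k y = ubk Pi k y.
Proof. by rewrite /ubk /Gk PiSet_relax /negs filter_map -map_comp. Qed.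

End Relaxation.

Section Continuity.
Context {R : realFieldType} {D : nat}.
Implicit Types (Pi : seq (@constr R D)) (el eu x : 'I_D -> R).

Definition oclose (e : R) (a b : option R) : Prop :=
  match a, b with
  | Some a, Some b => `|a - b| <= e
  | None, None => True
  | _, _ => False
  end.

Lemma dist_max_le (v v' u u' e : R) : `|v - v'| <= e -> `|u - u'| <= e ->
  `|Num.max v u - Num.max v' u'| <= e.
Proof.
rewrite !ler_norml => /andP [h1 h2] /andP [h3 h4].
by case: (leP v u) => g1; case: (leP v' u') => g2; apply/andP; split; lra.
Qed.

Lemma dist_min_le (v v' u u' e : R) : `|v - v'| <= e -> `|u - u'| <= e ->
  `|Num.min v u - Num.min v' u'| <= e.
Proof.
rewrite !ler_norml => /andP [h1 h2] /andP [h3 h4].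
by case: (leP v u) => g1; case: (leP v' u') => g2; apply/andP; split; lra.
Qed.

Lemma dist_clamp_le e lo lo' hi hi' (a : R) : 0 <= e ->
  oclose e lo lo' -> oclose e hi hi' ->
  `|clamp lo hi a - clamp lo' hi' a| <= e.
Proof.
move=> e0 hl hh; rewrite /clamp.
have hv : `|(if lo is Some l then Num.max a l else a) -
            (if lo' is Some l then Num.max a l else a)| <= e.
  case: lo lo' hl => [l|] [l'|] //= hl; last by rewrite subrr normr0.
  by apply: dist_max_le; rewrite // subrr normr0.
by case: hi hi' hh => [u|] [u'|] //= hu; apply: dist_min_le.
Qed.

Lemma maxlist_close (S : Type) (s : seq S) (f g : S -> R) e :
  (forall a, List.In a s -> `|f a - g a| <= e) ->
  oclose e (maxlist (map f s)) (maxlist (map g s)).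
Proof.
case: s => [//|a s] /= fg; elim: s fg => [|b s IH] fg /=; first by apply: fg; left.
apply: dist_max_le; first by apply: fg; right; left.
by apply: IH => c [<-|Hc]; apply: fg; [left|right; right].
Qed.

Lemma minlist_close (S : Type) (s : seq S) (f g : S -> R) e :
  (forall a, List.In a s -> `|f a - g a| <= e) ->
  oclose e (minlist (map f s)) (minlist (map g s)).
Proof.
case: s => [//|a s] /= fg; elim: s fg => [|b s IH] fg /=; first by apply: fg; left.
apply: dist_min_le; first by apply: fg; right; left.
by apply: IH => c [<-|Hc]; apply: fg; [left|right; right].
Qed.

Lemma CLk_clamp_dist Pi el eu x k y : 0 <= el k -> 0 <= eu k ->
  `|CLk Pi el eu x k y - clamp (lbk Pi k y) (ubk Pi k y) (x k)| <= el k + eu k.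
Proof.
move=> el0 eu0.
have uk_clamp : `|uk Pi el x k y - clamp (lbk Pi k y) (ubk Pi k y) (x k)| <= el k.
  have maxk_vk : `|maxk Pi el x k y - vk Pi x k y| <= el k.
    by rewrite /maxk; case: ifP => _; rewrite ?subrr ?normr0 // addrC addKr ger0_norm.
  rewrite /uk; case: ubk => [u|] //=.
  by apply: dist_min_le; rewrite // subrr normr0.
have CLk_uk : `|CLk Pi el eu x k y - uk Pi el x k y| <= eu k.
  by rewrite /CLk; case: ifP => _; rewrite ?subrr ?normr0 // addrC addKr normrN ger0_norm.
have := ler_distD (uk Pi el x k y) (CLk Pi el eu x k y)
                  (clamp (lbk Pi k y) (ubk Pi k y) (x k)).
lra.
Qed.

Definition ratio_norm (phi : @constr R D) (k : 'I_D) : R :=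
  \sum_(l < D) `|cw phi l / cw phi k|.

Lemma epsv_dist phi k y z e : 0 <= e -> (forall l, `|y l - z l| <= e) ->
  `|epsv phi k y - epsv phi k z| <= ratio_norm phi k * e.
Proof.
move=> e0 yz.
have -> : epsv phi k y - epsv phi k z =
          \sum_(l < D | l != k) cw phi l / cw phi k * (z l - y l).
  have -> : \sum_(l < D | l != k) cw phi l / cw phi k * (z l - y l) =
            \sum_(l < D | l != k) cw phi l / cw phi k * z l -
            \sum_(l < D | l != k) cw phi l / cw phi k * y l.
    by rewrite -sumrB; apply: eq_bigr => l _; rewrite mulrBr.
  rewrite /epsv; ring.
apply: le_trans (ler_norm_sum _ _ _) _.
rewrite /ratio_norm mulr_suml big_mkcond /=; apply: ler_sum => l _.
case: ifP => _; last by rewrite mulr_ge0.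
by rewrite normrM ler_wpM2l // distrC.
Qed.

Definition lip_bound Pi : R := \sum_(k < D) \sum_(phi <- PiSet Pi k.+1) ratio_norm phi k.

Lemma lip_bound_ge0 Pi : 0 <= lip_bound Pi.
Proof. by do 2![apply: sumr_ge0 => ? _]; apply: sumr_ge0. Qed.

Lemma ratio_norm_le Pi (k : 'I_D) phi : List.In phi (PiSet Pi k.+1) ->
  ratio_norm phi k <= lip_bound Pi.
Proof.
have rn0 psi j : 0 <= ratio_norm psi j by apply: sumr_ge0.
move=> Hphi; apply: le_trans (_ : _ <= \sum_(psi <- PiSet Pi k.+1) ratio_norm psi k) _.
  elim: (PiSet Pi k.+1) Hphi => [//|psi s IH] /= [->|Hs]; rewrite big_cons.
    by rewrite lerDl sumr_ge0.
  by apply: le_trans (IH Hs) _; rewrite lerDr.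
rewrite /lip_bound (bigD1 k) //= lerDl.
by apply: sumr_ge0 => j _; apply: sumr_ge0.
Qed.

Lemma CLk_relax_dist Pi el eu x k y y' e : 0 <= el k -> 0 <= eu k -> 0 <= e ->
  (forall l, `|y' l - y l| <= e) ->
  `|CLk Pi el eu x k y' - CLk (relax Pi) (fun _ => 0) (fun _ => 0) x k y|
    <= el k + eu k + lip_bound Pi * e.
Proof.
move=> el0 eu0 e0 yy'; rewrite CLk_eps0 lbk_relax ubk_relax.
have eps_close phi : List.In phi (PiSet Pi k.+1) ->
    `|epsv phi k y' - epsv phi k y| <= lip_bound Pi * e.
  move=> Hphi; apply: le_trans (epsv_dist _ _ e0 yy') _.
  by rewrite ler_wpM2r // ratio_norm_le.
have clamp_close : `|clamp (lbk Pi k y') (ubk Pi k y') (x k) -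
                     clamp (lbk Pi k y) (ubk Pi k y) (x k)| <= lip_bound Pi * e.
  apply: dist_clamp_le; first by rewrite mulr_ge0 ?lip_bound_ge0.
    by apply: maxlist_close => p /In_filter [/eps_close].
  by apply: minlist_close => n /In_filter [/eps_close].
have := ler_distD (clamp (lbk Pi k y') (ubk Pi k y') (x k)) (CLk Pi el eu x k y')
                  (clamp (lbk Pi k y) (ubk Pi k y) (x k)).
have := CLk_clamp_dist Pi x y' el0 eu0; lra.
Qed.

Lemma CL_relax_dist Pi el eu x d : admissible Pi el eu x ->
  (forall i, el i <= d /\ eu i <= d) -> 0 <= d ->
  forall m l, `|CLaux Pi el eu x m l - CLaux (relax Pi) (fun _ => 0) (fun _ => 0) x m l|
     <= (lip_bound Pi + 2) ^+ m * d.
Proof.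
move=> adm eld d0; have L0 := lip_bound_ge0 Pi.
elim=> [|m IH] l /=; first by rewrite subrr normr0 mulr_ge0 ?exprn_ge0 // addr_ge0.
set C := (lip_bound Pi + 2) ^+ m.
have C1 : 1 <= C by apply: exprn_ege1; lra.
have Cd : C * d <= (lip_bound Pi + 2) ^+ m.+1 * d.
  by rewrite exprS -/C -mulrA ler_peMl ?mulr_ge0 //; lra.
case: eqP => _; last exact: le_trans (IH l) Cd.
have [el0 [eu0 _]] := adm l; have [eld' eud'] := eld l.
apply: le_trans (CLk_relax_dist Pi x (ltW el0) (ltW eu0) (mulr_ge0 (le_trans ler01 C1) d0) IH) _.
have : d <= C * d by rewrite ler_peMl.
rewrite exprS -/C; nra.
Qed.

End Continuity.

Theorem theorem3 (R : realFieldType) (D : nat) (Pi : seq (@constr R D))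
    (x : 'I_D -> R) :
  satisfiable Pi ->
  forall el eu : 'I_D -> R, admissible Pi el eu x ->
    ((forall i, CL Pi el eu x i = CLge Pi x i) ->
       optimal Pi x (CL Pi el eu x)) /\
    (~ (forall i, CL Pi el eu x i = CLge Pi x i) ->
       forall eta : R, 0 < eta -> exists2 delta : R, 0 < delta &
         forall el' eu' : 'I_D -> R, admissible Pi el' eu' x ->
           (forall i, el' i < delta /\ eu' i < delta) ->
           forall i, `|CL Pi el' eu' x i - CLge Pi x i| < eta).
Proof.
move=> Pi_sat el eu adm; split.
  move=> CL_CLge; split; first exact: CL_sat.
  move=> x' /sat_relax x'_sat x'_near i; rewrite CL_CLge.
  by apply: CL_eps0_closest x'_sat _ i => j; have := x'_near j; rewrite CL_CLge.
move=> _ eta eta0; set K := (lip_bound Pi + 2) ^+ D.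
have K0 : 0 < K by rewrite exprn_gt0 // ltr_wpDl ?lip_bound_ge0.
exists (eta / (2 * K)) => [|el' eu' adm' small i]; first by rewrite divr_gt0 ?mulr_gt0.
have eld : forall j, el' j <= eta / (2 * K) /\ eu' j <= eta / (2 * K).
  by move=> j; have [/ltW ? /ltW ?] := small j.
apply: le_lt_trans (CL_relax_dist adm' eld _ D i) _.
  by rewrite ltW ?divr_gt0 ?mulr_gt0.
have -> : K * (eta / (2 * K)) = eta / 2 by field; rewrite lt0r_neq0.
lra.
Qed.
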